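(* Let $r=a/b$ with $a,b$ coprime positive integers. Then $I_r$ intertwines the left sub-Laplacian $\mathcal L$ with $\square_r=\mathcal L+rT^2$: $$I_r(\mathcal Lf)=\square_r(I_rf),\qquad f\in S(\overline{\mathbb{H}}).$$
   Context: $\mathbb{H}=\mathbb{C}\times\mathbb{R}$ (coordinates $z=x+iy$, $t$) with product $(x+iy,t)(u+iv,s)=(x+u+i(y+v),\,t+s+\tfrac12(xv-yu))$; $\overline{\mathbb{H}}=\mathbb{H}/\{(0,k\pi):k\in\mathbb{Z}\}\cong\mathbb{C}\times(\mathbb{R}/\pi\mathbb{Z})$, $S(\overline{\mathbb{H}})$ its Schwartz functions. For $r=a/b$, $\gamma_r(s)=(\sqrt r e^{is/\sqrt r},\tfrac12\sqrt r s)$ and $I_rf(z,t)=\int_0^{2\pi\sqrt{ab}}f((z,t)\gamma_r(s))\,ds$. The left-invariant vector fields are $X=\partial_x-\tfrac12y\partial_t$, $Y=\partial_y+\tfrac12x\partial_t$, $T=\partial_t$, and the left sub-Laplacian is $\mathcal L=-(X^2+Y^2)$. *)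

From Stdlib Require Import Reals Lra Arith List.
From Coquelicot Require Import Coquelicot.
Open Scope R_scope.

(* Functions on H = C x R are written in coordinates (x, y, t), z = x + i y,
   complex valued. *)
Definition fun3 := R -> R -> R -> C.

Definition CDerive (h : R -> C) (u : R) : C :=
  (Derive (fun v => fst (h v)) u, Derive (fun v => snd (h v)) u).
Definition ex_CDerive (h : R -> C) (u : R) : Prop :=
  ex_derive (fun v => fst (h v)) u /\ ex_derive (fun v => snd (h v)) u.

Definition CRInt (h : R -> C) (a b : R) : C :=
  (RInt (fun v => fst (h v)) a b, RInt (fun v => snd (h v)) a b).

Inductive dir := Dx | Dy | Dt.

Definition pd (d : dir) (f : fun3) : fun3 := fun x y t =>
  match d with
  | Dx => CDerive (fun u => f u y t) x
  | Dy => CDerive (fun u => f x u t) y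
  | Dt => CDerive (fun u => f x y u) t
  end.

Definition ex_pd (d : dir) (f : fun3) (x y t : R) : Prop :=
  match d with
  | Dx => ex_CDerive (fun u => f u y t) x
  | Dy => ex_CDerive (fun u => f x u t) y
  | Dt => ex_CDerive (fun u => f x y u) t
  end.

Definition Dw (w : list dir) (f : fun3) : fun3 := fold_right pd f w.

Definition cont3 (f : fun3) : Prop :=
  forall x y t eps, 0 < eps -> exists delta, 0 < delta /\
    forall x' y' t', Rabs (x' - x) < delta -> Rabs (y' - y) < delta ->
      Rabs (t' - t) < delta -> Cmod (Cminus (f x' y' t') (f x y t)) < eps.

Definition smooth3 (f : fun3) : Prop :=
  forall w : list dir, cont3 (Dw w f) /\
    forall d x y t, ex_pd d (Dw w f) x y t.

(* Functions on Hbar = H / {(0, k pi)}: pi-periodic in t. *)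
Definition periodic_t (f : fun3) : Prop :=
  forall x y t, f x y (t + PI) = f x y t.

(* Schwartz class S(Hbar): smooth, pi-periodic in t, and every derivative
   decays faster than any power of |z| (uniformly in t, which ranges over
   the compact circle R / pi Z). *)
Definition Schwartz_Hbar (f : fun3) : Prop :=
  smooth3 f /\ periodic_t f /\
  forall (w : list dir) (N : nat), exists M : R, forall x y t,
    (1 + x ^ 2 + y ^ 2) ^ N * Cmod (Dw w f x y t) <= M.

Definition Xop (f : fun3) : fun3 := fun x y t =>
  Cminus (pd Dx f x y t) (Cmult (RtoC (y / 2)) (pd Dt f x y t)).
Definition Yop (f : fun3) : fun3 := fun x y t =>
  Cplus (pd Dy f x y t) (Cmult (RtoC (x / 2)) (pd Dt f x y t)).
Definition Top (f : fun3) : fun3 := pd Dt f.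

Definition subLap (f : fun3) : fun3 := fun x y t =>
  Copp (Cplus (Xop (Xop f) x y t) (Yop (Yop f) x y t)).

Definition box (r : R) (f : fun3) : fun3 := fun x y t =>
  Cplus (subLap f x y t) (Cmult (RtoC r) (Top (Top f) x y t)).

(* Heisenberg product (x+iy,t)(u+iv,s) = (x+u + i(y+v), t+s+1/2(xv-yu)),
   evaluated as f at the product. *)
Definition f_at_prod (f : fun3) (x y t u v s : R) : C :=
  f (x + u) (y + v) (t + s + / 2 * (x * v - y * u)).

Definition gamma_x (r s : R) : R := sqrt r * cos (s / sqrt r).
Definition gamma_y (r s : R) : R := sqrt r * sin (s / sqrt r).
Definition gamma_t (r s : R) : R := / 2 * sqrt r * s.

Definition I_op (a b : nat) (f : fun3) : fun3 := fun x y t =>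
  let r := INR a / INR b in
  CRInt (fun s => f_at_prod f x y t (gamma_x r s) (gamma_y r s) (gamma_t r s))
        0 (2 * PI * sqrt (INR a * INR b)).

(* Right translation by h = (u, v, w) twists the left-invariant fields by the centre:
   X (f o R_h) = (X f + v T f) o R_h and Y (f o R_h) = (Y f - u T f) o R_h, hence
   box_r (f o R_h) = (L f - 2 (v X T f - u Y T f) + (r - u^2 - v^2) T^2 f) o R_h.
   Along gamma_r = (u, v, w) we have u' = - v / sqrt r, v' = u / sqrt r and
   w' = sqrt r / 2, so the correction term is exactly 2 sqrt r d/ds [T f (g gamma_r(s))].
   Differentiating under the integral sign, box_r (I_r f) (g) is thus the integral of
   (L f) (g gamma_r(s)) plus the integral of a derivative, which vanishes because
   gamma_r(2 pi sqrt(ab)) = gamma_r(0) (0, a pi) and f is pi-periodic in t.  Real and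
   imaginary parts are treated separately, and only two continuous derivatives of f
   are used. *)

From Pilot Require Import Defs.
From Stdlib Require Import Reals Arith.
From Coquelicot Require Import Coquelicot.
Open Scope R_scope.
From Stdlib Require Import Lra Lia List.
(* [Reals] also exports a constant [Dx]; re-importing [Defs] makes [Dx] the direction again. *)
Import Defs.

Definition fun3R := R -> R -> R -> R.

Definition coord (d : dir) (x y t : R) : R :=
  match d with Dx => x | Dy => y | Dt => t end.

Definition along (d : dir) (phi : fun3R) (x y t : R) : R -> R :=
  match d with
  | Dx => fun z => phi z y t
  | Dy => fun z => phi x z t
  | Dt => fun z => phi x y z
  end.

Definition rpd (d : dir) (phi : fun3R) : fun3R := fun x y t =>
  Derive (along d phi x y t) (coord d x y t).
Definition ex_rpd (d : dir) (phi : fun3R) (x y t : R) : Prop :=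
  ex_derive (along d phi x y t) (coord d x y t).
Definition is_rpd (d : dir) (phi : fun3R) (x y t l : R) : Prop :=
  is_derive (along d phi x y t) (coord d x y t) l.

Definition cont3r (phi : fun3R) : Prop :=
  forall x y t eps, 0 < eps -> exists delta, 0 < delta /\
    forall x' y' t', Rabs (x' - x) < delta -> Rabs (y' - y) < delta ->
      Rabs (t' - t) < delta -> Rabs (phi x' y' t' - phi x y t) < eps.

Definition C1 (phi : fun3R) : Prop :=
  cont3r phi /\ (forall d, cont3r (rpd d phi)) /\ (forall d x y t, ex_rpd d phi x y t).

Definition C2 (phi : fun3R) : Prop := C1 phi /\ forall d, C1 (rpd d phi).

Lemma is_rpd_unique d phi x y t l : is_rpd d phi x y t l -> rpd d phi x y t = l.
Proof. apply is_derive_unique. Qed.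

Lemma is_rpd_ex_rpd d phi x y t l : is_rpd d phi x y t l -> ex_rpd d phi x y t.
Proof. intros H; exists l; exact H. Qed.

Lemma is_rpd_ext d (phi psi : fun3R) x y t l :
  (forall x y t, phi x y t = psi x y t) -> is_rpd d phi x y t l -> is_rpd d psi x y t l.
Proof. intros E; destruct d; apply is_derive_ext; intros; apply E. Qed.

Lemma is_rpd_eq d phi x y t l l' : l = l' -> is_rpd d phi x y t l -> is_rpd d phi x y t l'.
Proof. intros ->; auto. Qed.

Lemma rpd_ext d (phi psi : fun3R) x y t :
  (forall x y t, phi x y t = psi x y t) -> rpd d phi x y t = rpd d psi x y t.
Proof. intros E; destruct d; apply Derive_ext; intros; apply E. Qed.

Lemma ex_rpd_ext d (phi psi : fun3R) x y t :
  (forall x y t, phi x y t = psi x y t) -> ex_rpd d phi x y t -> ex_rpd d psi x y t.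
Proof. intros E; destruct d; apply ex_derive_ext; intros; apply E. Qed.

Lemma cont3r_ext (phi psi : fun3R) :
  (forall x y t, phi x y t = psi x y t) -> cont3r phi -> cont3r psi.
Proof.
  intros E H x y t eps Heps. destruct (H x y t eps Heps) as [delta [Hd Hc]].
  exists delta; split; [exact Hd|]. intros; rewrite <- !E; auto.
Qed.

Lemma C1_ext (phi psi : fun3R) : (forall x y t, phi x y t = psi x y t) -> C1 phi -> C1 psi.
Proof.
  intros E [Hc [Hd He]]. split; [|split].
  - exact (cont3r_ext _ _ E Hc).
  - intros d. apply (cont3r_ext (rpd d phi)); [intros; apply rpd_ext, E|apply Hd].
  - intros d x y t. apply (ex_rpd_ext d phi); auto.
Qed.

Lemma is_rpd_plus d phi psi x y t l1 l2 :
  is_rpd d phi x y t l1 -> is_rpd d psi x y t l2 ->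
  is_rpd d (fun x y t => phi x y t + psi x y t) x y t (l1 + l2).
Proof. intros H1 H2; destruct d; exact (is_derive_plus _ _ _ _ _ H1 H2). Qed.

Lemma is_rpd_scal d phi x y t c l :
  is_rpd d phi x y t l -> is_rpd d (fun x y t => c * phi x y t) x y t (c * l).
Proof. intros H; destruct d; exact (is_derive_scal _ _ c _ H). Qed.

Lemma is_rpd_along_ext d (phi psi : fun3R) x y t l :
  (forall z, along d phi x y t z = along d psi x y t z) ->
  is_rpd d phi x y t l -> is_rpd d psi x y t l.
Proof. intros E. apply is_derive_ext, E. Qed.

(** * The chain rule and the symmetry of second derivatives *)

Lemma Rabs_lincomb3 (p1 p2 p3 a1 a2 a3 : R) :
  Rabs (p1 * a1 + p2 * a2 + p3 * a3) <= Rabs p1 * Rabs a1 + Rabs p2 * Rabs a2 + Rabs p3 * Rabs a3.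
Proof.
  rewrite <- !Rabs_mult. eapply Rle_trans; [apply Rabs_triang|].
  apply Rplus_le_compat_r, Rabs_triang.
Qed.

Lemma MVT_Rabs (g : R -> R) (a0 a : R) :
  (forall u, ex_derive g u) ->
  exists xi, Rabs (xi - a0) <= Rabs (a - a0) /\ g a - g a0 = Derive g xi * (a - a0).
Proof.
  intros Hg.
  destruct (MVT_gen g a0 a (Derive g)) as [c [Hc Heq]].
  - intros u _. apply Derive_correct, Hg.
  - intros u _. apply continuity_pt_filterlim.
    apply (ex_derive_continuous (K := R_AbsRing) (V := R_NormedModule)), Hg.
  - exists c. split; [|exact Heq].
    revert Hc. unfold Rmin, Rmax. destruct (Rle_dec a0 a); intros Hc;
      unfold Rabs; repeat destruct Rcase_abs; lra.
Qed.

Lemma C1_first_order (phi : fun3R) a0 b0 c0 eps : C1 phi -> 0 < eps ->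
  exists delta, 0 < delta /\ forall a b c,
    Rabs (a - a0) < delta -> Rabs (b - b0) < delta -> Rabs (c - c0) < delta ->
    Rabs (phi a b c - phi a0 b0 c0 - (rpd Dx phi a0 b0 c0 * (a - a0) +
      rpd Dy phi a0 b0 c0 * (b - b0) + rpd Dt phi a0 b0 c0 * (c - c0)))
    <= eps * (Rabs (a - a0) + Rabs (b - b0) + Rabs (c - c0)).
Proof.
  intros [_ [Hd He]] Heps.
  destruct (Hd Dx a0 b0 c0 eps Heps) as [d1 [Hd1 H1]].
  destruct (Hd Dy a0 b0 c0 eps Heps) as [d2 [Hd2 H2]].
  destruct (Hd Dt a0 b0 c0 eps Heps) as [d3 [Hd3 H3]].
  exists (Rmin d1 (Rmin d2 d3)). split; [apply Rmin_pos; [|apply Rmin_pos]; lra|].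
  intros a b c Ha Hb Hc.
  assert (m1 := Rmin_l d1 (Rmin d2 d3)). assert (m2 := Rmin_r d1 (Rmin d2 d3)).
  assert (m3 := Rmin_l d2 d3). assert (m4 := Rmin_r d2 d3).
  destruct (MVT_Rabs (fun u => phi u b c) a0 a) as [x1 [Hx1 E1]]; [intros; apply (He Dx)|].
  destruct (MVT_Rabs (fun u => phi a0 u c) b0 b) as [x2 [Hx2 E2]]; [intros; apply (He Dy)|].
  destruct (MVT_Rabs (fun u => phi a0 b0 u) c0 c) as [x3 [Hx3 E3]]; [intros; apply (He Dt)|].
  assert (B1 : Rabs (rpd Dx phi x1 b c - rpd Dx phi a0 b0 c0) <= eps) by (left; apply H1; lra).
  assert (B2 : Rabs (rpd Dy phi a0 x2 c - rpd Dy phi a0 b0 c0) <= eps).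
  { left; apply H2; rewrite ?Rminus_diag, ?Rabs_R0; lra. }
  assert (B3 : Rabs (rpd Dt phi a0 b0 x3 - rpd Dt phi a0 b0 c0) <= eps).
  { left; apply H3; rewrite ?Rminus_diag, ?Rabs_R0; lra. }
  change (Derive _ x1) with (rpd Dx phi x1 b c) in E1.
  change (Derive _ x2) with (rpd Dy phi a0 x2 c) in E2.
  change (Derive _ x3) with (rpd Dt phi a0 b0 x3) in E3.
  replace (phi a b c - phi a0 b0 c0 - _)
    with ((rpd Dx phi x1 b c - rpd Dx phi a0 b0 c0) * (a - a0) +
          (rpd Dy phi a0 x2 c - rpd Dy phi a0 b0 c0) * (b - b0) +
          (rpd Dt phi a0 b0 x3 - rpd Dt phi a0 b0 c0) * (c - c0)).
  2:{ replace (phi a b c - phi a0 b0 c0) with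
        ((phi a b c - phi a0 b c) + (phi a0 b c - phi a0 b0 c) + (phi a0 b0 c - phi a0 b0 c0))
        by ring.
      rewrite E1, E2, E3. ring. }
  eapply Rle_trans; [apply Rabs_lincomb3|].
  generalize (Rabs_pos (a - a0)) (Rabs_pos (b - b0)) (Rabs_pos (c - c0)); nra.
Qed.

Lemma increment_bound (a : R -> R) (s0 da : R) : is_derive a s0 da ->
  exists delta, 0 < delta /\ forall h, Rabs h < delta ->
    Rabs (a (s0 + h) - a s0) <= (Rabs da + 1) * Rabs h.
Proof.
  intros Ha. apply is_derive_Reals in Ha.
  destruct (Ha 1 Rlt_0_1) as [delta Hd].
  exists delta. split; [apply cond_pos|]. intros h Hh.
  destruct (Req_dec h 0) as [->|Hh0].
  { rewrite Rplus_0_r, Rminus_diag, !Rabs_R0, Rmult_0_r. apply Rle_refl. }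
  specialize (Hd h Hh0 Hh).
  replace (a (s0 + h) - a s0) with (((a (s0 + h) - a s0) / h - da + da) * h) by (field; exact Hh0).
  rewrite Rabs_mult. apply Rmult_le_compat_r; [apply Rabs_pos|].
  eapply Rle_trans; [apply Rabs_triang|]. lra.
Qed.

Lemma comp3_remainder (phi : fun3R) (a b c : R -> R) (s0 da db dc eps : R) :
  C1 phi -> is_derive a s0 da -> is_derive b s0 db -> is_derive c s0 dc -> 0 < eps ->
  exists delta, 0 < delta /\ forall h, Rabs h < delta ->
    Rabs (phi (a (s0 + h)) (b (s0 + h)) (c (s0 + h)) - phi (a s0) (b s0) (c s0)
      - (rpd Dx phi (a s0) (b s0) (c s0) * (a (s0 + h) - a s0)
         + rpd Dy phi (a s0) (b s0) (c s0) * (b (s0 + h) - b s0)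
         + rpd Dt phi (a s0) (b s0) (c s0) * (c (s0 + h) - c s0)))
    <= eps * Rabs h.
Proof.
  intros Hphi Ha Hb Hc Heps.
  destruct (increment_bound a s0 da Ha) as [ra [Hra Ba]].
  destruct (increment_bound b s0 db Hb) as [rb [Hrb Bb]].
  destruct (increment_bound c s0 dc Hc) as [rc [Hrc Bc]].
  set (K := Rabs da + Rabs db + Rabs dc + 3).
  assert (HK : 3 <= K) by (unfold K; generalize (Rabs_pos da) (Rabs_pos db) (Rabs_pos dc); lra).
  assert (He : 0 < eps / K) by (apply Rdiv_lt_0_compat; lra).
  destruct (C1_first_order phi (a s0) (b s0) (c s0) _ Hphi He) as [rf [Hrf Hf]].
  exists (Rmin (rf / K) (Rmin ra (Rmin rb rc))). split.
  { assert (0 < rf / K) by (apply Rdiv_lt_0_compat; lra). repeat apply Rmin_pos; lra. }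
  intros h Hh.
  apply Rmin_Rgt_l in Hh as [HhK Hh]. apply Rmin_Rgt_l in Hh as [Hha Hh].
  apply Rmin_Rgt_l in Hh as [Hhb Hhc].
  specialize (Ba h Hha). specialize (Bb h Hhb). specialize (Bc h Hhc).
  specialize (Hf (a (s0 + h)) (b (s0 + h)) (c (s0 + h))).
  set (A := a (s0 + h) - a s0) in *. set (B := b (s0 + h) - b s0) in *.
  set (C := c (s0 + h) - c s0) in *.
  assert (HhK' : K * Rabs h < rf).
  { apply (Rmult_lt_compat_r K) in HhK; [|lra].
    unfold Rdiv in HhK. rewrite Rmult_assoc, Rinv_l in HhK; lra. }
  assert (HABC : Rabs A + Rabs B + Rabs C <= K * Rabs h).
  { replace (K * Rabs h) with
      ((Rabs da + 1) * Rabs h + (Rabs db + 1) * Rabs h + (Rabs dc + 1) * Rabs h)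
      by (unfold K; ring).
    lra. }
  generalize (Rabs_pos A) (Rabs_pos B) (Rabs_pos C); intros.
  eapply Rle_trans; [apply Hf; lra|].
  replace (eps * Rabs h) with (eps / K * (K * Rabs h)) by (field; lra).
  apply Rmult_le_compat_l; lra.
Qed.

Lemma is_derive_comp3 (phi : fun3R) (a b c : R -> R) (s0 da db dc : R) :
  C1 phi -> is_derive a s0 da -> is_derive b s0 db -> is_derive c s0 dc ->
  is_derive (fun s => phi (a s) (b s) (c s)) s0
    (rpd Dx phi (a s0) (b s0) (c s0) * da + rpd Dy phi (a s0) (b s0) (c s0) * db
     + rpd Dt phi (a s0) (b s0) (c s0) * dc).
Proof.
  intros Hphi Ha Hb Hc. apply is_derive_Reals. intros eps Heps.
  set (Px := rpd Dx phi (a s0) (b s0) (c s0)).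
  set (Py := rpd Dy phi (a s0) (b s0) (c s0)).
  set (Pt := rpd Dt phi (a s0) (b s0) (c s0)).
  set (M := Rabs Px + Rabs Py + Rabs Pt + 1).
  assert (HM : 1 <= M) by (unfold M; generalize (Rabs_pos Px) (Rabs_pos Py) (Rabs_pos Pt); lra).
  assert (He : 0 < eps / (2 * M)) by (apply Rdiv_lt_0_compat; lra).
  destruct (comp3_remainder phi a b c s0 da db dc (eps / 2) Hphi Ha Hb Hc) as [rr [Hrr Hrem]];
    [lra|].
  apply is_derive_Reals in Ha, Hb, Hc.
  destruct (Ha _ He) as [qa Hqa]. destruct (Hb _ He) as [qb Hqb].
  destruct (Hc _ He) as [qc Hqc].
  assert (Hdelta : 0 < Rmin rr (Rmin qa (Rmin qb qc))).
  { generalize (cond_pos qa) (cond_pos qb) (cond_pos qc); intros. repeat apply Rmin_pos; lra. }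
  exists (mkposreal _ Hdelta). intros h Hh0 Hh. simpl in Hh.
  apply Rmin_Rgt_l in Hh as [Hhr Hh]. apply Rmin_Rgt_l in Hh as [Hha Hh].
  apply Rmin_Rgt_l in Hh as [Hhb Hhc].
  specialize (Hqa h Hh0 Hha). specialize (Hqb h Hh0 Hhb). specialize (Hqc h Hh0 Hhc).
  specialize (Hrem h Hhr). fold Px Py Pt in Hrem.
  set (A := a (s0 + h) - a s0) in *. set (B := b (s0 + h) - b s0) in *.
  set (C := c (s0 + h) - c s0) in *.
  set (Rm := phi (a (s0 + h)) (b (s0 + h)) (c (s0 + h)) - phi (a s0) (b s0) (c s0)
             - (Px * A + Py * B + Pt * C)) in *.
  replace ((phi (a (s0 + h)) (b (s0 + h)) (c (s0 + h)) - phi (a s0) (b s0) (c s0)) / h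
           - (Px * da + Py * db + Pt * dc))
    with (Rm / h + (Px * (A / h - da) + Py * (B / h - db) + Pt * (C / h - dc)))
    by (unfold Rm; field; exact Hh0).
  assert (Habsh : 0 < Rabs h) by (apply Rabs_pos_lt, Hh0).
  assert (R1 : Rabs (Rm / h) <= eps / 2).
  { unfold Rdiv. rewrite Rabs_mult, Rabs_inv.
    apply (Rmult_le_reg_r (Rabs h)); [exact Habsh|].
    rewrite Rmult_assoc, Rinv_l, Rmult_1_r by lra. exact Hrem. }
  assert (R2 : Rabs (Px * (A / h - da) + Py * (B / h - db) + Pt * (C / h - dc))
               <= (M - 1) * (eps / (2 * M))).
  { eapply Rle_trans; [apply Rabs_lincomb3|].
    replace (M - 1) with (Rabs Px + Rabs Py + Rabs Pt) by (unfold M; ring).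
    generalize (Rabs_pos Px) (Rabs_pos Py) (Rabs_pos Pt); nra. }
  assert (R3 : (M - 1) * (eps / (2 * M)) < eps / 2).
  { apply (Rmult_lt_reg_r (2 * M)); [lra|].
    replace ((M - 1) * (eps / (2 * M)) * (2 * M)) with ((M - 1) * eps) by (field; lra). nra. }
  eapply Rle_lt_trans; [apply Rabs_triang|]. lra.
Qed.

Lemma continuity_2d_pt_comp3 (psi : fun3R) (p1 p2 p3 : R -> R -> R) (z s : R) :
  cont3r psi -> continuity_2d_pt p1 z s -> continuity_2d_pt p2 z s ->
  continuity_2d_pt p3 z s ->
  continuity_2d_pt (fun u v => psi (p1 u v) (p2 u v) (p3 u v)) z s.
Proof.
  intros Hpsi H1 H2 H3 eps.
  destruct (Hpsi (p1 z s) (p2 z s) (p3 z s) eps (cond_pos eps)) as [d [Hd Hp]].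
  destruct (H1 (mkposreal d Hd)) as [d1 Hd1].
  destruct (H2 (mkposreal d Hd)) as [d2 Hd2].
  destruct (H3 (mkposreal d Hd)) as [d3 Hd3].
  exists (mkposreal _ (Rmin_pos _ _ (cond_pos d1) (Rmin_pos _ _ (cond_pos d2) (cond_pos d3)))).
  simpl. intros u v Hu Hv.
  apply Rmin_Rgt_l in Hu as [Hu1 Hu]. apply Rmin_Rgt_l in Hu as [Hu2 Hu3].
  apply Rmin_Rgt_l in Hv as [Hv1 Hv]. apply Rmin_Rgt_l in Hv as [Hv2 Hv3].
  apply Hp; [apply Hd1|apply Hd2|apply Hd3]; assumption.
Qed.

Lemma continuity_2d_pt_snd (g : R -> R) (z s : R) :
  continuity_pt g s -> continuity_2d_pt (fun _ v => g v) z s.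
Proof.
  intros H. apply (continuity_1d_2d_pt_comp g (fun _ v => v)); [exact H|].
  apply continuity_2d_pt_id2.
Qed.

Lemma continuous_2d_pt_section (G : R -> R -> R) (z s : R) :
  continuity_2d_pt G z s -> continuous (G z) s.
Proof.
  intros H. apply continuity_pt_filterlim.
  intros eps Heps. destruct (H (mkposreal eps Heps)) as [d Hd].
  exists d. split; [apply cond_pos|].
  intros v [_ Hv]. apply Hd; [rewrite Rminus_diag, Rabs_R0; apply cond_pos|exact Hv].
Qed.

Ltac cont2d :=
  repeat first
    [ apply continuity_2d_pt_plus
    | apply continuity_2d_pt_minus
    | apply continuity_2d_pt_mult
    | apply continuity_2d_pt_opp
    | apply continuity_2d_pt_const
    | apply continuity_2d_pt_id1
    | apply continuity_2d_pt_id2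
    | apply continuity_2d_pt_snd; solve [auto] ].

Lemma continuity_pt_of_is_derive (g : R -> R) s l : is_derive g s l -> continuity_pt g s.
Proof.
  intros H. apply continuity_pt_filterlim.
  apply (ex_derive_continuous (K := R_AbsRing) (V := R_NormedModule)). exists l; exact H.
Qed.

Lemma rpd_Dt_comm d phi x y t : C2 phi -> rpd Dt (rpd d phi) x y t = rpd d (rpd Dt phi) x y t.
Proof.
  intros [[_ [_ He]] H1].
  assert (Hc : forall d d', cont3r (rpd d (rpd d' phi))) by (intros; apply H1).
  assert (He2 : forall d d' x y t, ex_rpd d (rpd d' phi) x y t) by (intros; apply H1).
  destruct d; [| |reflexivity]; symmetry.
  - apply (Schwarz (fun u v => phi u y v) x t).
    + exists (mkposreal 1 Rlt_0_1). intros u v _ _.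
      exact (conj (He Dx u y v) (conj (He Dt u y v) (conj (He2 Dx Dt u y v) (He2 Dt Dx u y v)))).
    + apply (continuity_2d_pt_comp3 (rpd Dx (rpd Dt phi)) (fun u _ => u) (fun _ _ => y)
               (fun _ v => v)); [apply Hc|cont2d..].
    + apply (continuity_2d_pt_comp3 (rpd Dt (rpd Dx phi)) (fun u _ => u) (fun _ _ => y)
               (fun _ v => v)); [apply Hc|cont2d..].
  - apply (Schwarz (fun u v => phi x u v) y t).
    + exists (mkposreal 1 Rlt_0_1). intros u v _ _.
      exact (conj (He Dy x u v) (conj (He Dt x u v) (conj (He2 Dy Dt x u v) (He2 Dt Dy x u v)))).
    + apply (continuity_2d_pt_comp3 (rpd Dy (rpd Dt phi)) (fun _ _ => x) (fun u _ => u)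
               (fun _ v => v)); [apply Hc|cont2d..].
    + apply (continuity_2d_pt_comp3 (rpd Dt (rpd Dy phi)) (fun _ _ => x) (fun u _ => u)
               (fun _ v => v)); [apply Hc|cont2d..].
Qed.

(** * Differentiation under the integral sign *)

(* Joint continuity in one coordinate and the parameter, as [is_derive_RInt_param] needs. *)
Definition cont_slices (K : R -> fun3R) : Prop :=
  forall d x y t z0 s0, continuity_2d_pt (fun z s => along d (K s) x y t z) z0 s0.

Lemma continuity_pt_slices (K : R -> fun3R) x y t s :
  cont_slices K -> continuity_pt (fun s => K s x y t) s.
Proof.
  intros HK. apply continuity_pt_filterlim.
  exact (continuous_2d_pt_section _ x s (HK Dx x y t x s)).
Qed.

Lemma ex_RInt_slices (K : R -> fun3R) L x y t :
  cont_slices K -> ex_RInt (fun s => K s x y t) 0 L.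
Proof.
  intros HK. apply (ex_RInt_continuous (V := R_CompleteNormedModule)). intros s _.
  apply continuity_pt_filterlim, continuity_pt_slices, HK.
Qed.

Lemma is_rpd_RInt d (K : R -> fun3R) L x y t :
  cont_slices K -> cont_slices (fun s => rpd d (K s)) ->
  (forall s x y t, ex_rpd d (K s) x y t) ->
  is_rpd d (fun x y t => RInt (fun s => K s x y t) 0 L) x y t
    (RInt (fun s => rpd d (K s) x y t) 0 L).
Proof.
  intros HK HdK Hex.
  assert (Hd : forall s z, Derive (along d (K s) x y t) z = along d (rpd d (K s)) x y t z)
    by (destruct d; reflexivity).
  assert (E : along d (fun x y t => RInt (fun s => K s x y t) 0 L) x y t
              = fun z => RInt (fun s => along d (K s) x y t z) 0 L)
    by (destruct d; reflexivity).
  unfold is_rpd. rewrite E.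
  apply (is_derive_RInt_param (fun z s => along d (K s) x y t z)).
  - apply filter_forall. intros z s _.
    destruct d; [exact (Hex s z y t)|exact (Hex s x z t)|exact (Hex s x y z)].
  - intros s _. apply (continuity_2d_pt_ext (fun z s => along d (rpd d (K s)) x y t z)).
    + intros; symmetry; apply Hd.
    + apply HdK.
  - apply filter_forall. intros z.
    apply (ex_RInt_continuous (V := R_CompleteNormedModule)). intros s _.
    apply (continuous_2d_pt_section (fun z s => along d (K s) x y t z)), HK.
Qed.

Lemma cont_slices_ext (K K' : R -> fun3R) :
  (forall s x y t, K s x y t = K' s x y t) -> cont_slices K -> cont_slices K'.
Proof.
  intros E HK d x y t z0 s0. apply (continuity_2d_pt_ext (fun z s => along d (K s) x y t z)).
  - intros; destruct d; apply E.
  - apply HK.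
Qed.

Lemma cont_slices_plus (K1 K2 : R -> fun3R) :
  cont_slices K1 -> cont_slices K2 -> cont_slices (fun s x y t => K1 s x y t + K2 s x y t).
Proof.
  intros H1 H2 d x y t z0 s0.
  specialize (H1 d x y t z0 s0). specialize (H2 d x y t z0 s0).
  destruct d; exact (continuity_2d_pt_plus _ _ _ _ H1 H2).
Qed.

Lemma cont_slices_scal (c : R -> R) (K : R -> fun3R) :
  (forall s, continuity_pt c s) -> cont_slices K ->
  cont_slices (fun s x y t => c s * K s x y t).
Proof.
  intros Hc HK d x y t z0 s0. specialize (HK d x y t z0 s0).
  destruct d; exact (continuity_2d_pt_mult _ _ _ _ (continuity_2d_pt_snd _ _ _ (Hc s0)) HK).
Qed.

Lemma is_RInt_plusR (f g : R -> R) a b If Ig :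
  is_RInt f a b If -> is_RInt g a b Ig -> is_RInt (fun s => f s + g s) a b (If + Ig).
Proof. apply (is_RInt_plus (V := R_NormedModule)). Qed.

Lemma is_RInt_minusR (f g : R -> R) a b If Ig :
  is_RInt f a b If -> is_RInt g a b Ig -> is_RInt (fun s => f s - g s) a b (If - Ig).
Proof. apply (is_RInt_minus (V := R_NormedModule)). Qed.

Lemma is_RInt_scalR (f : R -> R) a b c If :
  is_RInt f a b If -> is_RInt (fun s => c * f s) a b (c * If).
Proof. apply (is_RInt_scal (V := R_NormedModule)). Qed.

Lemma is_RInt_oppR (f : R -> R) a b If :
  is_RInt f a b If -> is_RInt (fun s => - f s) a b (- If).
Proof. apply (is_RInt_opp (V := R_NormedModule)). Qed.

Lemma is_RInt_extR (f g : R -> R) a b If :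
  (forall s, f s = g s) -> is_RInt f a b If -> is_RInt g a b If.
Proof. intros E. apply (is_RInt_ext (V := R_NormedModule)); intros; apply E. Qed.

(** * Right translations *)

Definition rtransl (u v w : R) (phi : fun3R) : fun3R :=
  fun x y t => phi (x + u) (y + v) (t + w + / 2 * (x * v - y * u)).

(* The [d]-derivative of the [t]-coordinate [t + w + (x v - y u) / 2] of [(x, y, t) (u, v, w)]. *)
Definition shear (d : dir) (u v : R) : R :=
  match d with Dx => / 2 * v | Dy => - (/ 2 * u) | Dt => 0 end.

Definition rtransl_rpd (d : dir) (u v w : R) (phi : fun3R) : fun3R := fun x y t =>
  rtransl u v w (rpd d phi) x y t + shear d u v * rtransl u v w (rpd Dt phi) x y t.

Lemma is_derive_eq_val (g : R -> R) s l l' : is_derive g s l -> l = l' -> is_derive g s l'.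
Proof. intros H <-; exact H. Qed.

Lemma is_rpd_rtransl d u v w phi x y t : C1 phi ->
  is_rpd d (rtransl u v w phi) x y t (rtransl_rpd d u v w phi x y t).
Proof.
  intros Hphi. unfold is_rpd, rtransl_rpd, rtransl.
  destruct d; simpl;
    (eapply is_derive_eq_val; [apply (is_derive_comp3 phi); [exact Hphi|..]|]);
    try (auto_derive; [exact I|reflexivity]); simpl; ring.
Qed.

Lemma is_rpd2_rtransl d d' u v w phi x y t : C2 phi ->
  is_rpd d (rpd d' (rtransl u v w phi)) x y t
    (rtransl_rpd d u v w (rpd d' phi) x y t
     + shear d' u v * rtransl_rpd d u v w (rpd Dt phi) x y t).
Proof.
  intros [H1 H2]. apply (is_rpd_ext d (rtransl_rpd d' u v w phi)).
  - intros; symmetry; apply is_rpd_unique, is_rpd_rtransl, H1.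
  - apply is_rpd_plus; [|apply is_rpd_scal]; apply is_rpd_rtransl, H2.
Qed.

Lemma cont_slices_rtransl (U V W : R -> R) psi :
  (forall s, continuity_pt U s) -> (forall s, continuity_pt V s) ->
  (forall s, continuity_pt W s) -> cont3r psi ->
  cont_slices (fun s => rtransl (U s) (V s) (W s) psi).
Proof.
  intros HU HV HW Hpsi d x y t z0 s0.
  destruct d; apply continuity_2d_pt_comp3; auto; cont2d.
Qed.

Lemma continuity_pt_shear d (U V : R -> R) s :
  continuity_pt U s -> continuity_pt V s -> continuity_pt (fun s => shear d (U s) (V s)) s.
Proof.
  intros HU HV. destruct d; simpl.
  - apply continuity_pt_mult; [apply continuity_pt_const; intros ? ?; reflexivity|exact HV].
  - apply continuity_pt_opp, continuity_pt_mult;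
      [apply continuity_pt_const; intros ? ?; reflexivity|exact HU].
  - apply continuity_pt_const; intros ? ?; reflexivity.
Qed.

Lemma cont_slices_rtransl_rpd d (U V W : R -> R) psi :
  (forall s, continuity_pt U s) -> (forall s, continuity_pt V s) ->
  (forall s, continuity_pt W s) -> C1 psi ->
  cont_slices (fun s => rtransl_rpd d (U s) (V s) (W s) psi).
Proof.
  intros HU HV HW [_ [Hd _]].
  apply cont_slices_plus; [|apply cont_slices_scal; [intros; apply continuity_pt_shear; auto|]];
    apply cont_slices_rtransl; auto.
Qed.

Lemma continuity_pt_rtransl_curve (U V W : R -> R) psi x y t s :
  (forall s, continuity_pt U s) -> (forall s, continuity_pt V s) ->
  (forall s, continuity_pt W s) -> cont3r psi ->
  continuity_pt (fun s => rtransl (U s) (V s) (W s) psi x y t) s.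
Proof.
  intros; apply (continuity_pt_slices (fun s => rtransl (U s) (V s) (W s) psi)).
  apply cont_slices_rtransl; assumption.
Qed.

Lemma is_derive_rtransl_curve (U V W : R -> R) s U' V' W' psi x y t :
  C1 psi -> is_derive U s U' -> is_derive V s V' -> is_derive W s W' ->
  is_derive (fun s => rtransl (U s) (V s) (W s) psi x y t) s
    (rtransl (U s) (V s) (W s) (rpd Dx psi) x y t * U'
     + rtransl (U s) (V s) (W s) (rpd Dy psi) x y t * V'
     + rtransl (U s) (V s) (W s) (rpd Dt psi) x y t * (W' + / 2 * (x * V' - y * U'))).
Proof.
  intros Hpsi HU HV HW. unfold rtransl.
  apply (is_derive_comp3 psi (fun s => x + U s) (fun s => y + V s)
           (fun s => t + W s + / 2 * (x * V s - y * U s))); [exact Hpsi|..].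
  all: assert (DU : Derive (fun z => U z) s = U') by (apply is_derive_unique, HU).
  all: assert (DV : Derive (fun z => V z) s = V') by (apply is_derive_unique, HV).
  all: assert (DW : Derive (fun z => W z) s = W') by (apply is_derive_unique, HW).
  all: auto_derive; repeat split; try (eexists; eassumption).
  all: rewrite ?DU, ?DV, ?DW; ring.
Qed.

Definition curve_avg (U V W : R -> R) (L : R) (phi : fun3R) : fun3R :=
  fun x y t => RInt (fun s => rtransl (U s) (V s) (W s) phi x y t) 0 L.

Section CurveAverage.

Variables (U V W : R -> R) (L : R) (phi : fun3R).
Hypotheses (HU : forall s, continuity_pt U s) (HV : forall s, continuity_pt V s)
  (HW : forall s, continuity_pt W s) (Hphi : C2 phi).

Lemma cont_slices_rpd_rtransl d :
  cont_slices (fun s => rpd d (rtransl (U s) (V s) (W s) phi)).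
Proof.
  apply (cont_slices_ext (fun s => rtransl_rpd d (U s) (V s) (W s) phi)).
  - intros; symmetry; apply is_rpd_unique, is_rpd_rtransl, Hphi.
  - apply cont_slices_rtransl_rpd, Hphi; auto.
Qed.

Lemma cont_slices_rpd2_rtransl d d' :
  cont_slices (fun s => rpd d (rpd d' (rtransl (U s) (V s) (W s) phi))).
Proof.
  apply (cont_slices_ext (fun s x y t => rtransl_rpd d (U s) (V s) (W s) (rpd d' phi) x y t
     + shear d' (U s) (V s) * rtransl_rpd d (U s) (V s) (W s) (rpd Dt phi) x y t)).
  - intros; symmetry; apply is_rpd_unique, is_rpd2_rtransl, Hphi.
  - apply cont_slices_plus;
      [|apply cont_slices_scal; [intros; apply continuity_pt_shear; auto|]];
      apply cont_slices_rtransl_rpd, Hphi; auto.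
Qed.

Lemma is_rpd2_curve_avg d d' x y t :
  is_rpd d (rpd d' (curve_avg U V W L phi)) x y t
    (RInt (fun s => rpd d (rpd d' (rtransl (U s) (V s) (W s) phi)) x y t) 0 L).
Proof.
  destruct Hphi as [H1 H2].
  apply (is_rpd_ext d (fun x y t => RInt (fun s => rpd d' (rtransl (U s) (V s) (W s) phi) x y t) 0 L)).
  - intros; symmetry; apply is_rpd_unique, is_rpd_RInt.
    + apply cont_slices_rtransl, H1; auto.
    + apply cont_slices_rpd_rtransl.
    + intros; eapply is_rpd_ex_rpd, is_rpd_rtransl, H1.
  - apply is_rpd_RInt.
    + apply cont_slices_rpd_rtransl.
    + apply cont_slices_rpd2_rtransl.
    + intros; eapply is_rpd_ex_rpd, is_rpd2_rtransl, Hphi.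
Qed.

End CurveAverage.

Lemma curve_avg_ext U V W L (phi psi : fun3R) x y t :
  (forall x y t, phi x y t = psi x y t) -> curve_avg U V W L phi x y t = curve_avg U V W L psi x y t.
Proof. intros E. apply RInt_ext. intros s _. apply E. Qed.

Definition hessian (phi : fun3R) (x y t : R) (d d' : dir) : R := rpd d (rpd d' phi) x y t.

Definition Xr (phi : fun3R) : fun3R := fun x y t => rpd Dx phi x y t - y / 2 * rpd Dt phi x y t.
Definition Yr (phi : fun3R) : fun3R := fun x y t => rpd Dy phi x y t + x / 2 * rpd Dt phi x y t.

Definition lap_form (x y : R) (A : dir -> dir -> R) : R :=
  - ((A Dx Dx - y / 2 * A Dx Dt - y / 2 * (A Dt Dx - y / 2 * A Dt Dt))
     + (A Dy Dy + x / 2 * A Dy Dt + x / 2 * (A Dt Dy + x / 2 * A Dt Dt))).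

Definition box_form (r x y : R) (A : dir -> dir -> R) : R := lap_form x y A + r * A Dt Dt.

Lemma is_rpd_Xr d phi x y t l1 l2 : d <> Dy ->
  is_rpd d (rpd Dx phi) x y t l1 -> is_rpd d (rpd Dt phi) x y t l2 ->
  is_rpd d (Xr phi) x y t (l1 - y / 2 * l2).
Proof.
  intros Hd H1 H2.
  apply (is_rpd_along_ext d (fun x' y' t' => rpd Dx phi x' y' t' + - (y / 2) * rpd Dt phi x' y' t')).
  - intros z; destruct d; [|congruence|]; unfold Xr; simpl; ring.
  - apply (is_rpd_eq _ _ _ _ _ (l1 + - (y / 2) * l2)); [ring|].
    apply is_rpd_plus; [|apply is_rpd_scal]; assumption.
Qed.

Lemma is_rpd_Yr d phi x y t l1 l2 : d <> Dx ->
  is_rpd d (rpd Dy phi) x y t l1 -> is_rpd d (rpd Dt phi) x y t l2 ->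
  is_rpd d (Yr phi) x y t (l1 + x / 2 * l2).
Proof.
  intros Hd H1 H2.
  apply (is_rpd_along_ext d (fun x' y' t' => rpd Dy phi x' y' t' + x / 2 * rpd Dt phi x' y' t')).
  - intros z; destruct d; [congruence| |]; reflexivity.
  - apply is_rpd_plus; [|apply is_rpd_scal]; assumption.
Qed.

Lemma lap_form_hessian phi x y t : (forall d d', ex_rpd d (rpd d' phi) x y t) ->
  - (Xr (Xr phi) x y t + Yr (Yr phi) x y t) = lap_form x y (hessian phi x y t).
Proof.
  intros He.
  assert (H : forall d d', is_rpd d (rpd d' phi) x y t (hessian phi x y t d d'))
    by (intros; apply Derive_correct, He).
  unfold Xr at 1, Yr at 1.
  rewrite (is_rpd_unique _ _ _ _ _ _ (is_rpd_Xr Dx phi x y t _ _ ltac:(discriminate) (H _ _) (H _ _))).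
  rewrite (is_rpd_unique _ _ _ _ _ _ (is_rpd_Xr Dt phi x y t _ _ ltac:(discriminate) (H _ _) (H _ _))).
  rewrite (is_rpd_unique _ _ _ _ _ _ (is_rpd_Yr Dy phi x y t _ _ ltac:(discriminate) (H _ _) (H _ _))).
  rewrite (is_rpd_unique _ _ _ _ _ _ (is_rpd_Yr Dt phi x y t _ _ ltac:(discriminate) (H _ _) (H _ _))).
  reflexivity.
Qed.

Lemma is_RInt_box_form r x y (A : R -> dir -> dir -> R) (B : dir -> dir -> R) a b :
  (forall d d', is_RInt (fun s => A s d d') a b (B d d')) ->
  is_RInt (fun s => box_form r x y (A s)) a b (box_form r x y B).
Proof.
  intros HA. unfold box_form, lap_form.
  repeat match goal with
  | |- is_RInt (fun s => _ - _) _ _ _ => apply is_RInt_minusR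
  | |- is_RInt (fun s => _ + _) _ _ _ => apply is_RInt_plusR
  | |- is_RInt (fun s => - _) _ _ _ => apply is_RInt_oppR
  | |- is_RInt (fun s => _ * _) _ _ _ => apply is_RInt_scalR
  | |- is_RInt (fun s => A s _ _) _ _ _ => apply HA
  end.
Qed.

Lemma box_form_hessian_ext r (phi psi : fun3R) x y t :
  (forall x y t, phi x y t = psi x y t) ->
  box_form r x y (hessian phi x y t) = box_form r x y (hessian psi x y t).
Proof.
  intros E.
  assert (H : forall d d', hessian phi x y t d d' = hessian psi x y t d d')
    by (intros; apply rpd_ext; intros; apply rpd_ext, E).
  unfold box_form, lap_form. rewrite !H. reflexivity.
Qed.

Lemma box_form_rtransl r u v w phi x y t : C2 phi ->
  box_form r x y (hessian (rtransl u v w phi) x y t)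
  = rtransl u v w (fun x y t => lap_form x y (hessian phi x y t)) x y t
    - 2 * (v * rtransl u v w (Xr (rpd Dt phi)) x y t - u * rtransl u v w (Yr (rpd Dt phi)) x y t)
    + (r - (u ^ 2 + v ^ 2)) * rtransl u v w (rpd Dt (rpd Dt phi)) x y t.
Proof.
  intros Hphi.
  assert (E : forall d d', hessian (rtransl u v w phi) x y t d d'
    = rtransl_rpd d u v w (rpd d' phi) x y t + shear d' u v * rtransl_rpd d u v w (rpd Dt phi) x y t)
    by (intros; apply is_rpd_unique, is_rpd2_rtransl, Hphi).
  unfold box_form, lap_form. rewrite !E.
  unfold rtransl_rpd, hessian, Xr, Yr, rtransl, shear.
  rewrite !(rpd_Dt_comm Dx), !(rpd_Dt_comm Dy) by exact Hphi.
  field.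
Qed.

(** * The curve gamma_r *)

Definition periodicR (phi : fun3R) : Prop := forall x y t, phi x y (t + PI) = phi x y t.

Lemma periodicR_rpd_Dt phi : periodicR phi -> periodicR (rpd Dt phi).
Proof.
  intros Hp x y t. unfold rpd; simpl. unfold Derive. f_equal. apply Lim_ext. intros h.
  replace (t + PI + h) with ((t + h) + PI) by ring. rewrite !Hp. reflexivity.
Qed.

Lemma periodicR_nat phi (n : nat) x y t : periodicR phi -> phi x y (t + INR n * PI) = phi x y t.
Proof.
  intros Hp. induction n as [|n IH].
  - simpl. rewrite Rmult_0_l, Rplus_0_r. reflexivity.
  - rewrite S_INR. replace (t + (INR n + 1) * PI) with ((t + INR n * PI) + PI) by ring.
    rewrite Hp. exact IH.
Qed.

Lemma is_derive_gamma_x r s : 0 < r -> is_derive (gamma_x r) s (- (gamma_y r s / sqrt r)).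
Proof.
  intros Hr. assert (Hq : 0 < sqrt r) by (apply sqrt_lt_R0, Hr).
  unfold gamma_x, gamma_y. auto_derive; [exact I|]. unfold Rdiv. field. lra.
Qed.

Lemma is_derive_gamma_y r s : 0 < r -> is_derive (gamma_y r) s (gamma_x r s / sqrt r).
Proof.
  intros Hr. assert (Hq : 0 < sqrt r) by (apply sqrt_lt_R0, Hr).
  unfold gamma_x, gamma_y. auto_derive; [exact I|]. unfold Rdiv. field. lra.
Qed.

Lemma is_derive_gamma_t r s : is_derive (gamma_t r) s (/ 2 * sqrt r).
Proof. unfold gamma_t. auto_derive; [exact I|]. ring. Qed.

(* [L / sqrt r = 2 pi b]: the horizontal projection of [gamma_r] winds [b] times. *)
Lemma gamma_closes (a b : nat) : (0 < a)%nat -> (0 < b)%nat ->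
  let r := INR a / INR b in let L := 2 * PI * sqrt (INR a * INR b) in
  gamma_x r L = gamma_x r 0 /\ gamma_y r L = gamma_y r 0 /\
  gamma_t r L = gamma_t r 0 + INR a * PI.
Proof.
  intros Ha Hb r L.
  assert (Hap : 0 < INR a) by (apply lt_0_INR; lia).
  assert (Hbp : 0 < INR b) by (apply lt_0_INR; lia).
  assert (Hq : 0 < sqrt r) by (apply sqrt_lt_R0, Rdiv_lt_0_compat; lra).
  assert (Hqq : sqrt r * sqrt r = r) by (apply sqrt_sqrt; unfold r; apply Rlt_le, Rdiv_lt_0_compat; lra).
  assert (HL : L = sqrt r * INR b * (2 * PI)).
  { unfold L. replace (INR a * INR b) with (r * (INR b * INR b)) by (unfold r; field; lra).
    rewrite sqrt_mult_alt, sqrt_square; [ring|lra|unfold r; apply Rlt_le, Rdiv_lt_0_compat; lra]. }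
  assert (Hturns : L / sqrt r = 0 + 2 * INR b * PI) by (rewrite HL; field; lra).
  unfold gamma_x, gamma_y, gamma_t. rewrite Hturns, cos_period, sin_period.
  replace (0 / sqrt r) with 0 by (unfold Rdiv; ring).
  repeat split. rewrite HL.
  replace (/ 2 * sqrt r * (sqrt r * INR b * (2 * PI))) with (sqrt r * sqrt r * INR b * PI) by field.
  rewrite Hqq. unfold r. field. lra.
Qed.

Lemma continuity_gamma_x r : 0 < r -> forall s, continuity_pt (gamma_x r) s.
Proof. intros Hr s; eapply continuity_pt_of_is_derive, is_derive_gamma_x, Hr. Qed.

Lemma continuity_gamma_y r : 0 < r -> forall s, continuity_pt (gamma_y r) s.
Proof. intros Hr s; eapply continuity_pt_of_is_derive, is_derive_gamma_y, Hr. Qed.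

Lemma continuity_gamma_t r : forall s, continuity_pt (gamma_t r) s.
Proof. intros s; eapply continuity_pt_of_is_derive, is_derive_gamma_t. Qed.

Definition gamma_transl (r : R) (psi : fun3R) (x y t s : R) : R :=
  rtransl (gamma_x r s) (gamma_y r s) (gamma_t r s) psi x y t.

Section ClosedGamma.

Variables (r L : R) (n : nat).
Hypotheses (Hr : 0 < r) (EX : gamma_x r L = gamma_x r 0) (EY : gamma_y r L = gamma_y r 0)
  (ET : gamma_t r L = gamma_t r 0 + INR n * PI).

Lemma is_RInt_gamma_loop psi x y t : C1 psi -> periodicR psi ->
  is_RInt (fun s => gamma_transl r (rpd Dx psi) x y t s * (- (gamma_y r s / sqrt r))
    + gamma_transl r (rpd Dy psi) x y t s * (gamma_x r s / sqrt r)
    + gamma_transl r (rpd Dt psi) x y t s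
        * (/ 2 * sqrt r + / 2 * (x * (gamma_x r s / sqrt r) - y * - (gamma_y r s / sqrt r))))
    0 L 0.
Proof.
  intros Hpsi Hper.
  pose proof (continuity_gamma_x r Hr) as HU. pose proof (continuity_gamma_y r Hr) as HV.
  pose proof (continuity_gamma_t r) as HW.
  assert (Hloop : minus (gamma_transl r psi x y t L) (gamma_transl r psi x y t 0) = 0).
  { unfold gamma_transl, rtransl. rewrite EX, EY, ET.
    replace (t + (gamma_t r 0 + INR n * PI) + _)
      with (t + gamma_t r 0 + / 2 * (x * gamma_y r 0 - y * gamma_x r 0) + INR n * PI) by ring.
    rewrite periodicR_nat by exact Hper.
    apply Rminus_diag. }
  match goal with |- is_RInt ?D 0 L 0 =>
    enough (HD : is_RInt D 0 L (minus (gamma_transl r psi x y t L) (gamma_transl r psi x y t 0)))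
      by (rewrite Hloop in HD; exact HD) end.
  apply (is_RInt_derive (V := R_CompleteNormedModule)); intros s _.
  - apply is_derive_rtransl_curve;
      [exact Hpsi|apply is_derive_gamma_x, Hr|apply is_derive_gamma_y, Hr|apply is_derive_gamma_t].
  - apply continuity_pt_filterlim. unfold gamma_transl.
    repeat first [ apply HU | apply HV
                 | apply continuity_pt_rtransl_curve; [..|apply Hpsi]; assumption
                 | apply continuity_pt_plus | apply continuity_pt_minus
                 | apply continuity_pt_mult | apply continuity_pt_opp
                 | apply continuity_pt_const; intros ? ?; reflexivity ].
Qed.

Lemma gamma_avg_intertwines (phi : fun3R) x y t : C2 phi -> periodicR phi ->
  is_RInt (fun s => gamma_transl r (fun x y t => lap_form x y (hessian phi x y t)) x y t s) 0 L
    (box_form r x y (hessian (curve_avg (gamma_x r) (gamma_y r) (gamma_t r) L phi) x y t)).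
Proof.
  intros Hphi Hper.
  assert (Hqq : sqrt r * sqrt r = r) by (apply sqrt_sqrt; lra).
  assert (Hq : 0 < sqrt r) by (apply sqrt_lt_R0, Hr).
  pose proof (continuity_gamma_x r Hr) as HU. pose proof (continuity_gamma_y r Hr) as HV.
  pose proof (continuity_gamma_t r) as HW.
  assert (Hbox : is_RInt (fun s => box_form r x y (hessian
                   (rtransl (gamma_x r s) (gamma_y r s) (gamma_t r s) phi) x y t)) 0 L
                   (box_form r x y (hessian (curve_avg (gamma_x r) (gamma_y r) (gamma_t r) L phi) x y t))).
  { apply is_RInt_box_form. intros d d'. unfold hessian.
    rewrite (is_rpd_unique _ _ _ _ _ _ (is_rpd2_curve_avg _ _ _ L phi HU HV HW Hphi d d' x y t)).
    apply (RInt_correct (V := R_CompleteNormedModule)).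
    apply (ex_RInt_slices (fun s => rpd d (rpd d' (rtransl (gamma_x r s) (gamma_y r s) (gamma_t r s) phi)))).
    apply cont_slices_rpd2_rtransl; assumption. }
  assert (Hloop := is_RInt_gamma_loop (rpd Dt phi) x y t (proj2 Hphi Dt) (periodicR_rpd_Dt _ Hper)).
  assert (H := is_RInt_minusR _ _ _ _ _ _ Hbox (is_RInt_scalR _ _ _ (2 * sqrt r) _ Hloop)).
  rewrite Rmult_0_r, Rminus_0_r in H.
  refine (is_RInt_extR _ _ _ _ _ _ H). intros s.
  rewrite box_form_rtransl by exact Hphi.
  unfold gamma_transl, Xr, Yr, rtransl.
  set (u := gamma_x r s). set (v := gamma_y r s). set (w := gamma_t r s).
  set (q := sqrt r) in *. rewrite <- Hqq.
  field. lra.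
Qed.

End ClosedGamma.

Definition cpart (k : bool) (z : C) : R := if k then fst z else snd z.
Definition cpartf (k : bool) (g : fun3) : fun3R := fun x y t => cpart k (g x y t).

Lemma C_eq_cpart (z1 z2 : C) : (forall k, cpart k z1 = cpart k z2) -> z1 = z2.
Proof.
  destruct z1 as [a1 b1], z2 as [a2 b2]; intros H.
  generalize (H true) (H false); simpl; intros -> ->; reflexivity.
Qed.

Lemma cpartf_pd k d g x y t : cpartf k (pd d g) x y t = rpd d (cpartf k g) x y t.
Proof. destruct k, d; reflexivity. Qed.

Lemma cont3r_cpartf k g : cont3 g -> cont3r (cpartf k g).
Proof.
  intros H x y t eps Heps. destruct (H x y t eps Heps) as [delta [Hd Hc]].
  exists delta; split; [exact Hd|]. intros x' y' t' H1 H2 H3.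
  eapply Rle_lt_trans; [|apply (Hc _ _ _ H1 H2 H3)].
  eapply Rle_trans; [|apply Rmax_Cmod].
  destruct k; simpl; [apply Rmax_l|apply Rmax_r].
Qed.

Lemma C1_cpartf k g : cont3 g -> (forall d, cont3 (pd d g)) ->
  (forall d x y t, ex_pd d g x y t) -> C1 (cpartf k g).
Proof.
  intros Hc Hd He. split; [|split].
  - apply cont3r_cpartf, Hc.
  - intros d. apply (cont3r_ext (cpartf k (pd d g))); [apply cpartf_pd|].
    apply cont3r_cpartf, Hd.
  - intros d x y t. specialize (He d x y t). destruct k, d; apply He.
Qed.

Lemma C2_cpartf k f : smooth3 f -> C2 (cpartf k f).
Proof.
  intros Hs. split.
  - apply C1_cpartf; [apply (Hs nil)|intros d; apply (Hs (d :: nil))|apply (Hs nil)].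
  - intros d. apply (C1_ext (cpartf k (pd d f))); [apply cpartf_pd|].
    apply C1_cpartf; [apply (Hs (d :: nil))|intros d'; apply (Hs (d' :: d :: nil))|].
    apply (Hs (d :: nil)).
Qed.

Lemma Xr_ext (phi psi : fun3R) x y t :
  (forall x y t, phi x y t = psi x y t) -> Xr phi x y t = Xr psi x y t.
Proof. intros E; unfold Xr; rewrite !(rpd_ext _ phi psi _ _ _ E); reflexivity. Qed.

Lemma Yr_ext (phi psi : fun3R) x y t :
  (forall x y t, phi x y t = psi x y t) -> Yr phi x y t = Yr psi x y t.
Proof. intros E; unfold Yr; rewrite !(rpd_ext _ phi psi _ _ _ E); reflexivity. Qed.

Lemma cpart_Xop k g x y t : cpart k (Xop g x y t) = Xr (cpartf k g) x y t.
Proof. unfold Xr; rewrite <- !cpartf_pd; destruct k; unfold Xop; simpl; ring. Qed.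

Lemma cpart_Yop k g x y t : cpart k (Yop g x y t) = Yr (cpartf k g) x y t.
Proof. unfold Yr; rewrite <- !cpartf_pd; destruct k; unfold Yop; simpl; ring. Qed.

Lemma cpart_subLap k g x y t :
  (forall d d', ex_rpd d (rpd d' (cpartf k g)) x y t) ->
  cpart k (subLap g x y t) = lap_form x y (hessian (cpartf k g) x y t).
Proof.
  intros He. rewrite <- lap_form_hessian by exact He.
  transitivity (- (cpart k (Xop (Xop g) x y t) + cpart k (Yop (Yop g) x y t)));
    [destruct k; reflexivity|].
  rewrite cpart_Xop, cpart_Yop, (Xr_ext _ (Xr (cpartf k g))), (Yr_ext _ (Yr (cpartf k g)));
    [reflexivity|apply cpart_Yop|apply cpart_Xop].
Qed.

Lemma cpart_box k r F x y t :
  (forall d d', ex_rpd d (rpd d' (cpartf k F)) x y t) ->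
  cpart k (box r F x y t) = box_form r x y (hessian (cpartf k F) x y t).
Proof.
  intros He. unfold box_form. rewrite <- cpart_subLap by exact He.
  assert (ETT : cpart k (Top (Top F) x y t) = hessian (cpartf k F) x y t Dt Dt).
  { change (cpartf k (pd Dt (pd Dt F)) x y t = rpd Dt (rpd Dt (cpartf k F)) x y t).
    rewrite cpartf_pd. apply rpd_ext, cpartf_pd. }
  rewrite <- ETT. destruct k; unfold box; simpl; ring.
Qed.

Lemma cpart_I_op k a b g x y t :
  cpart k (I_op a b g x y t)
  = curve_avg (gamma_x (INR a / INR b)) (gamma_y (INR a / INR b)) (gamma_t (INR a / INR b))
      (2 * PI * sqrt (INR a * INR b)) (cpartf k g) x y t.
Proof. destruct k; reflexivity. Qed.

Theorem mainTheorem12 (a b : nat) (f : R -> R -> R -> C) :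
  (0 < a)%nat -> (0 < b)%nat -> Nat.gcd a b = 1%nat ->
  Schwartz_Hbar f ->
  forall x y t : R,
    I_op a b (subLap f) x y t = box (INR a / INR b) (I_op a b f) x y t.
Proof.
  intros Ha Hb _ [Hsmooth [Hper _]] x y t.
  destruct (gamma_closes a b Ha Hb) as [EX [EY ET]].
  set (r := INR a / INR b) in *. set (L := 2 * PI * sqrt (INR a * INR b)) in *.
  assert (Hr : 0 < r) by (apply Rdiv_lt_0_compat; apply lt_0_INR; lia).
  apply C_eq_cpart. intros k.
  set (phi := cpartf k f).
  assert (Hphi : C2 phi) by apply C2_cpartf, Hsmooth.
  assert (Hperphi : periodicR phi) by (intros x' y' t'; unfold phi, cpartf; rewrite Hper; reflexivity).
  assert (Havg : forall x y t, cpartf k (I_op a b f) x y t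
                   = curve_avg (gamma_x r) (gamma_y r) (gamma_t r) L phi x y t)
    by (intros; apply cpart_I_op).
  rewrite cpart_I_op, cpart_box, (box_form_hessian_ext _ _ _ _ _ _ Havg).
  - rewrite (curve_avg_ext _ _ _ _ _ (fun x y t => lap_form x y (hessian phi x y t)))
      by (intros; apply cpart_subLap; intros; apply Hphi).
    apply is_RInt_unique, (gamma_avg_intertwines r L a); assumption.
  - intros d d'. apply (ex_rpd_ext d (rpd d' (curve_avg (gamma_x r) (gamma_y r) (gamma_t r) L phi))).
    + intros; apply rpd_ext; intros; symmetry; apply Havg.
    + eapply is_rpd_ex_rpd, is_rpd2_curve_avg;
        [apply continuity_gamma_x, Hr|apply continuity_gamma_y, Hr|apply continuity_gamma_t|exact Hphi].
Qed.
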